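(* For any $m \in \mathbb{N}$ and any $\vec x = (x_m,\dots,x_1) \in \mathbb{Z}_2^m$, let $I(\vec x) = \sum_{i=1}^m x_i 2^{i-1}$ denote its corresponding integer. Let $V \subseteq \mathbb{Z}_2^n$ be a vector subspace of dimension $k$, linearly ordered via $I$ (i.e. $\vec v < \vec v'$ iff $I(\vec v) < I(\vec v')$), and enumerate its elements in increasing order as $V = \{\vec v_0, \vec v_1, \dots, \vec v_{2^k-1}\}$. Then the map $T: \mathbb{Z}_2^k \to V$ given by $T(\vec x) = \vec v_{I(\vec x)}$ is a linear isomorphism (of $\mathbb{Z}_2$-vector spaces).
   Context: Vectors in $\mathbb{Z}_2^m$ are written with their first-listed coordinate as the most significant bit, so $I$ is the usual binary-to-integer map. *)

From HB Require Import structures.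
From mathcomp Require Import all_boot all_order all_algebra.
Set Implicit Arguments. Unset Strict Implicit. Unset Printing Implicit Defensive.
Import GRing.Theory.
Local Open Scope ring_scope.

Definition bitval (b : 'F_2) : nat := nat_of_bool (b != 0%R).

(* I(x) for x = (x_m, ..., x_1) stored as a row vector whose index 0 is the
   first-listed (most significant) coordinate x_m; index j holds x_{m-j}. *)
Definition Ival (m : nat) (x : 'rV['F_2]_m) : nat :=
  (\sum_(j < m) bitval (x ord0 j) * 2 ^ (m - 1 - j))%N.

Definition Venum (n : nat) (V : {vspace 'rV['F_2]_n}) : seq 'rV['F_2]_n :=
  sort (fun u v => Ival u <= Ival v)%N [seq v <- enum 'rV['F_2]_n | v \in V].

Definition Vth (n : nat) (V : {vspace 'rV['F_2]_n}) (i : nat) : 'rV['F_2]_n :=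
  nth 0 (Venum V) i.

From HB Require Import structures.
From mathcomp Require Import all_boot all_order all_algebra all_field.
From mathcomp Require Import zify.
Set Implicit Arguments. Unset Strict Implicit. Unset Printing Implicit Defensive.
Import GRing.Theory.

(* Call p a pivot of V when some vector of V has its first nonzero coordinate
   at p.  The first coordinate where two vectors of V differ is a pivot, since
   their difference lies in V.  Hence restricting to the pivot coordinates is
   injective on V and, because I compares vectors lexicographically at their
   first difference, it preserves the I-order; Gaussian elimination makes it
   onto, so there are k pivots.  The restriction therefore maps the increasing
   enumeration of V onto that of Z_2^k, whose I(x)-th entry is x itself: T is
   the inverse of a linear bijection. *)

Lemma F2_cases (x : 'F_2) : x = 0%R \/ x = 1%R.
Proof. by case: x => [[|[|//]]] ?; [left|right]; apply: val_inj. Qed.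

Lemma F2_neq0 (b : 'F_2) : b != 0%R -> b = 1%R.
Proof. by case: (F2_cases b) => ->. Qed.

Lemma F2_addr1 (a c : 'F_2) : a != c -> (a + 1 = c)%R.
Proof.
by case: (F2_cases a) => ->; case: (F2_cases c) => ->; rewrite ?eqxx // => _; apply: val_inj.
Qed.

Lemma first_diff (R : eqType) m (a b : 'rV[R]_m) : a != b ->
  exists2 p : 'I_m, (forall j : 'I_m, j < p -> a ord0 j = b ord0 j) & a ord0 p != b ord0 p.
Proof.
move=> neq_ab; have [j0 neq_j0] : exists j0, a ord0 j0 != b ord0 j0.
  apply/existsP; apply: contraR neq_ab => /existsPn eq_ab.
  by apply/eqP/rowP => j; apply/eqP; rewrite -[_ == _]negbK eq_ab.
case: (@arg_minnP _ j0 (fun j => a ord0 j != b ord0 j) val neq_j0) => p neq_p min_p.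
exists p => // j lt_jp; apply/eqP; apply: contraTT lt_jp => /min_p.
by rewrite -leqNgt.
Qed.

Lemma sum_bits_lt (c : nat -> nat) (a m : nat) : a <= m -> (forall j, c j <= 1) ->
  \sum_(a <= j < m) c j * 2 ^ (m - 1 - j) < 2 ^ (m - a).
Proof.
move=> le_am c_le1; rewrite -{1 2}(subnKC le_am); move: (m - a) => d {m le_am}.
elim: d c c_le1 => [|d IH] c c_le1; first by rewrite addn0 big_geq.
rewrite addnS big_nat_recl ?leq_addr // expnS mul2n -addnn.
have -> : \sum_(a <= j < a + d) c j.+1 * 2 ^ ((a + d).+1 - 1 - j.+1)
          = \sum_(a <= j < a + d) c j.+1 * 2 ^ (a + d - 1 - j).
  by apply: eq_big_nat => j _; congr (_ * 2 ^ _); lia.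
apply: leq_trans (leq_add (leqnn _) (IH _ (fun j => c_le1 j.+1))).
rewrite addnS ltnS leq_add2r (_ : (a + d).+1 - 1 - a = d); last by lia.
by rewrite -[X in _ <= X]mul1n leq_mul2r c_le1 orbT.
Qed.

(* Bits indexed by nat (0 out of range), so that sums can be split at any position. *)
Definition bit m (x : 'rV['F_2]_m) (j : nat) : nat :=
  oapp (fun i : 'I_m => bitval (x ord0 i)) 0 (insub j).

Lemma bit_le1 m (x : 'rV['F_2]_m) j : bit x j <= 1.
Proof. by rewrite /bit; case: insubP => //= i _ _; rewrite /bitval; case: (_ != 0). Qed.

Lemma bit_ord m (x : 'rV['F_2]_m) (i : 'I_m) : bit x i = bitval (x ord0 i).
Proof. by rewrite /bit valK. Qed.

Lemma IvalE m (x : 'rV['F_2]_m) :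
  Ival x = \sum_(0 <= j < m) bit x j * 2 ^ (m - 1 - j).
Proof. by rewrite big_mkord; apply: eq_bigr => i _; rewrite bit_ord. Qed.

Lemma Ival_lt_exp m (x : 'rV['F_2]_m) : Ival x < 2 ^ m.
Proof. by rewrite IvalE -[X in _ < 2 ^ X]subn0 sum_bits_lt // => j; apply: bit_le1. Qed.

Lemma Ival_lt_first_diff m (a b : 'rV['F_2]_m) (p : 'I_m) :
  (forall j : 'I_m, j < p -> a ord0 j = b ord0 j) ->
  a ord0 p = 0%R -> b ord0 p = 1%R -> Ival a < Ival b.
Proof.
move=> eq_ab ap0 bp1; have lt_pm := ltn_ord p.
rewrite !IvalE !(big_cat_nat (leq0n p) (ltnW lt_pm)) !(big_ltn lt_pm) /=.
have -> : \sum_(0 <= j < p) bit a j * 2 ^ (m - 1 - j)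
          = \sum_(0 <= j < p) bit b j * 2 ^ (m - 1 - j).
  apply: eq_big_nat => j /andP[_ lt_jp].
  have lt_jm : j < m by apply: ltn_trans lt_pm.
  by rewrite -[j]/(val (Ordinal lt_jm)) !bit_ord eq_ab.
rewrite ltn_add2l !bit_ord ap0 bp1 /bitval mul0n mul1n add0n.
apply: leq_trans (leq_addr _ _).
have -> : m - 1 - p = m - p.+1 by lia.
by apply: sum_bits_lt => // j; apply: bit_le1.
Qed.

Lemma Ival_leq_first_diff m (a b : 'rV['F_2]_m) (p : 'I_m) :
  (forall j : 'I_m, j < p -> a ord0 j = b ord0 j) -> a ord0 p != b ord0 p ->
  (Ival a <= Ival b) = (a ord0 p == 0%R).
Proof.
move=> eq_ab; have eq_ba (j : 'I_m) (lt_jp : j < p) : b ord0 j = a ord0 j by rewrite eq_ab.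
case: (F2_cases (a ord0 p)) => ap; case: (F2_cases (b ord0 p)) => bp;
  rewrite ap bp //= => _.
- exact/ltnW/(Ival_lt_first_diff eq_ab).
- by rewrite leqNgt (Ival_lt_first_diff eq_ba).
Qed.

Lemma Ival_inj m : injective (@Ival m).
Proof.
move=> a b eq_I; apply/eqP; apply: contraT => /first_diff[p eq_ab neq_p].
have eq_ba (j : 'I_m) (lt_jp : j < p) : b ord0 j = a ord0 j by rewrite eq_ab.
have ap0 : a ord0 p == 0%R by rewrite -(Ival_leq_first_diff eq_ab neq_p) eq_I.
have bp0 : b ord0 p == 0%R by rewrite -(Ival_leq_first_diff eq_ba) ?eq_I // eq_sym.
by move: neq_p; rewrite (eqP ap0) (eqP bp0) eqxx.
Qed.

Lemma card_rowF2 m : #|{: 'rV['F_2]_m}| = 2 ^ m.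
Proof. by rewrite card_mx card_Fp // mul1n. Qed.

Lemma nth_Ival_sorted m (s : seq 'rV['F_2]_m) :
  sorted (fun u v => Ival u <= Ival v) s -> perm_eq s (enum 'rV['F_2]_m) ->
  forall x, nth 0%R s (Ival x) = x.
Proof.
move=> sorted_s perm_s x.
have size_s : size s = 2 ^ m by rewrite (perm_size perm_s) -cardE card_rowF2.
have Ival_s : map (@Ival m) s = iota 0 (2 ^ m).
  have uniq_Is : uniq (map (@Ival m) s).
    by rewrite (map_inj_uniq (@Ival_inj m)) (perm_uniq perm_s) enum_uniq.
  have sub_Is : {subset map (@Ival m) s <= iota 0 (2 ^ m)}.
    by move=> _ /mapP[y _ ->]; rewrite mem_iota add0n Ival_lt_exp.
  have [|_ eq_Is] := uniq_min_size uniq_Is sub_Is; first by rewrite size_iota size_map size_s.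
  apply: (sorted_eq leq_trans anti_leq); rewrite ?sorted_map ?iota_sorted //.
  by apply: uniq_perm; rewrite ?iota_uniq.
have lt_xs : Ival x < size s by rewrite size_s Ival_lt_exp.
by apply: Ival_inj; rewrite -(nth_map 0%R 0 _ lt_xs) Ival_s nth_iota -?size_s.
Qed.

Lemma ltn_enum_val n (A : {set 'I_n}) (i j : 'I_#|A|) :
  i < j -> enum_val i < enum_val j.
Proof.
have ltn_tr : transitive (relpre (@nat_of_ord n) ltn) by move=> ? ? ?; apply: ltn_trans.
have sorted_A : sorted (relpre (@nat_of_ord n) ltn) (enum A).
  rewrite /enum_mem -enumT; apply: sorted_filter => //.
  by rewrite -sorted_map val_enum_ord iota_ltn_sorted.
move=> lt_ij; have x0 := enum_val i; rewrite !(enum_val_nth x0).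
by apply: (sorted_ltn_nth ltn_tr _ sorted_A); rewrite // inE -cardE ltn_ord.
Qed.

Lemma Ival_colsub_leq k m (f : 'I_k -> 'I_m) (u w : 'rV['F_2]_m) (q : 'I_k) :
  (forall i j : 'I_k, i < j -> f i < f j) ->
  (forall j : 'I_m, j < f q -> u ord0 j = w ord0 j) -> u ord0 (f q) != w ord0 (f q) ->
  (Ival (colsub f u) <= Ival (colsub f w)) = (Ival u <= Ival w).
Proof.
move=> f_ltn eq_uw neq_q; rewrite (Ival_leq_first_diff eq_uw neq_q).
by rewrite (@Ival_leq_first_diff _ _ _ q) /mxsub ?mxE // => i /f_ltn/eq_uw; rewrite !mxE.
Qed.

Lemma mem_Venum n (V : {vspace 'rV['F_2]_n}) v : (v \in Venum V) = (v \in V).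
Proof. by rewrite mem_sort mem_filter mem_enum andbT. Qed.

Lemma size_Venum n (V : {vspace 'rV['F_2]_n}) : size (Venum V) = 2 ^ \dim V.
Proof.
have -> : size (Venum V) = #|V| by rewrite size_sort cardE enumT.
by rewrite card_vspace card_Fp.
Qed.

Section Pivots.

Variables (n : nat) (V : {vspace 'rV['F_2]_n}).

Definition leading (v : 'rV['F_2]_n) (p : 'I_n) : bool :=
  (v ord0 p != 0%R) && [forall j : 'I_n, (j < p) ==> (v ord0 j == 0%R)].

Definition pivots : {set 'I_n} := [set p | [exists v, (v \in V) && leading v p]].

Definition pivot_coords (v : 'rV['F_2]_n) : 'rV['F_2]_#|pivots| := colsub enum_val v.

Lemma pivot_coords_linearP a u w :
  pivot_coords (a *: u + w) = (a *: pivot_coords u + pivot_coords w)%R.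
Proof. by apply/rowP => i; rewrite !mxE. Qed.

Lemma first_diff_pivot (u w : 'rV['F_2]_n) (p : 'I_n) : u \in V -> w \in V ->
  (forall j : 'I_n, j < p -> u ord0 j = w ord0 j) -> u ord0 p != w ord0 p ->
  p \in pivots.
Proof.
move=> Vu Vw eq_uw neq_p; rewrite inE; apply/existsP; exists (u - w)%R.
rewrite memvB //= /leading !mxE subr_eq0 neq_p /=.
by apply/forallP => j; apply/implyP => /eq_uw; rewrite !mxE => ->; rewrite subrr.
Qed.

Lemma pivot_coords_inj : {in V &, injective pivot_coords}.
Proof.
move=> u w Vu Vw eq_uw; apply/eqP; apply: contraT => /first_diff[p eq_p neq_p].
have piv_p := first_diff_pivot Vu Vw eq_p neq_p.
move/rowP/(_ (enum_rank_in piv_p p)): eq_uw; rewrite !mxE enum_rankK_in //.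
by move/eqP; rewrite (negbTE neq_p).
Qed.

Lemma pivot_coords_leq : {in V &, forall u w,
  (Ival (pivot_coords u) <= Ival (pivot_coords w)) = (Ival u <= Ival w)}.
Proof.
move=> u w Vu Vw; have [-> | /first_diff[p eq_p neq_p]] := eqVneq u w.
  by rewrite !leqnn.
have piv_p := first_diff_pivot Vu Vw eq_p neq_p.
apply: (@Ival_colsub_leq _ _ _ _ _ (enum_rank_in piv_p p)); rewrite ?enum_rankK_in //.
exact: ltn_enum_val.
Qed.

Lemma pivot_coords_surj (y : 'rV['F_2]_#|pivots|) :
  exists2 v, v \in V & pivot_coords v = y.
Proof.
(* Fix the pivot coordinates from left to right: adding the vector led by the
   current pivot leaves the earlier coordinates untouched. *)
suff /(_ n (leqnn n)) [v Vv eq_vy] : forall j, j <= n -> exists2 v, v \in V &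
    forall i : 'I_#|pivots|, enum_val i < j -> v ord0 (enum_val i) = y ord0 i.
  by exists v => //; apply/rowP => i; rewrite mxE eq_vy.
elim=> [_ | j IH lt_jn]; first by exists 0%R; rewrite ?mem0v.
have [v Vv eq_vy] := IH (ltnW lt_jn); pose pj := Ordinal lt_jn.
have below_j (i : 'I_#|pivots|) : enum_val i < j.+1 -> enum_val i < j \/ enum_val i = pj.
  by rewrite ltnS leq_eqVlt => /orP[/eqP eq_ij | ]; [right; apply: val_inj | left].
have [piv_j | npiv_j] := boolP (pj \in pivots); last first.
  exists v => // i /below_j[/eq_vy // | eq_ij].
  by move: npiv_j; rewrite -eq_ij enum_valP.
pose i0 := enum_rank_in piv_j pj.
have eq_i0 (i : 'I_#|pivots|) : enum_val i = pj -> i = i0.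
  by move=> eq_ij; apply: enum_val_inj; rewrite eq_ij enum_rankK_in.
have [w Vw /andP[wj_neq0 /forallP w_below]] : exists2 w, w \in V & leading w pj.
  by move: (piv_j); rewrite inE => /existsP[w /andP[]]; exists w.
have [eq_vj | neq_vj] := eqVneq (v ord0 pj) (y ord0 i0).
  by exists v => // i /below_j[/eq_vy // | /[dup] /eq_i0 -> ->].
exists (v + w)%R => [|i /below_j[lt_ij | /[dup] /eq_i0 -> ->]]; rewrite ?memvD // mxE.
  by rewrite eq_vy // (eqP (implyP (w_below _) lt_ij)) addr0.
by rewrite (F2_neq0 wj_neq0); apply: F2_addr1.
Qed.

Lemma perm_pivot_coords_Venum :
  perm_eq (map pivot_coords (Venum V)) (enum 'rV['F_2]_#|pivots|).
Proof.
apply: uniq_perm; rewrite ?enum_uniq //.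
  rewrite map_inj_in_uniq ?sort_uniq ?filter_uniq -?enumT ?enum_uniq // => u w.
  by rewrite !mem_Venum; apply: pivot_coords_inj.
move=> y; rewrite mem_enum; have [v Vv <-] := pivot_coords_surj y.
by rewrite map_f ?mem_Venum.
Qed.

Lemma card_pivots : #|pivots| = \dim V.
Proof.
apply: (@expnI 2) => //; rewrite -card_rowF2 -size_Venum -(size_map pivot_coords).
by rewrite (perm_size perm_pivot_coords_Venum) -cardE.
Qed.

Lemma sorted_pivot_coords_Venum :
  sorted (fun u v => Ival u <= Ival v) (map pivot_coords (Venum V)).
Proof.
apply: (homo_sorted_in (P := fun v => v \in V)); last first.
  by apply: sort_sorted => u w; apply: leq_total.
- by apply/allP => v; rewrite mem_Venum.
- by move=> u w Vu Vw; rewrite pivot_coords_leq.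
Qed.

Lemma pivot_coords_Vth (x : 'rV['F_2]_#|pivots|) : pivot_coords (Vth V (Ival x)) = x.
Proof.
have lt_x : Ival x < size (Venum V) by rewrite size_Venum -card_pivots Ival_lt_exp.
rewrite /Vth -(nth_map 0%R 0%R _ lt_x).
exact: nth_Ival_sorted sorted_pivot_coords_Venum perm_pivot_coords_Venum x.
Qed.

Lemma Vth_mem (x : 'rV['F_2]_#|pivots|) : Vth V (Ival x) \in V.
Proof. by rewrite -mem_Venum mem_nth // size_Venum -card_pivots Ival_lt_exp. Qed.

End Pivots.

Theorem lemma1 (n k : nat) (V : {vspace 'rV['F_2]_n}) (hk : \dim V = k) :
  let T := fun x : 'rV['F_2]_k => Vth V (Ival x) in
  linear T /\ injective T /\ (forall v : 'rV['F_2]_n, v \in V <-> exists x, T x = v).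
Proof.
move: hk; rewrite -card_pivots => <- T.
have S_inj := @pivot_coords_inj _ V; have ST := @pivot_coords_Vth _ V.
split; [|split].
- move=> a x y /=; apply: S_inj; rewrite ?memvD ?memvZ ?Vth_mem //.
  by rewrite pivot_coords_linearP !ST.
- by move=> x y /(congr1 (pivot_coords V)); rewrite !ST.
- move=> v; split=> [Vv | [x <-]]; last exact: Vth_mem.
  by exists (pivot_coords V v); apply: S_inj; rewrite ?Vth_mem ?ST.
Qed.
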